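(* Let $X=\{1,\dots,k\}^{\mathbb N}$ with the shift $T$, let $\log p$ be a real Hölder continuous normalized potential with Gibbs state $\mu$, and let $H:X\to\mathbb R$ be a Hölder continuous positive function. For every $\beta\in\mathbb R$, let $\nu_\beta$ be the eigenprobability of $\mathcal L_{-\beta\log H}^*$. Then for every $\beta\in\mathbb R$, every $n\in\mathbb N$ and every continuous $f:X\to\mathbb C$, $$\int f\,d\nu_\beta=\int (\Lambda_n)^{-1}\,E_\mu(\Lambda_n f\mid \mathcal F_n)\,d\nu_\beta .$$
   Context: $X=\{1,\dots,k\}^{\mathbb N}$ with the product topology, $T$ the left shift (each point has exactly $k$ preimages). For continuous $A:X\to\mathbb R$ the Ruelle operator is $\mathcal L_A(f)(x)=\sum_{T(z)=x}e^{A(z)}f(z)$, and its dual acts on probabilities by $\int f\,d(\mathcal L_A^*\nu)=\int \mathcal L_A(f)\,d\nu$. The potential $\log p$ (with $p>0$ Hölder) is normalized: $\mathcal L_p(1)=\sum_{T(z)=x}p(z)=1$, where $\mathcal L_p:=\mathcal L_{\log p}$; $\mu$ is the probability with $\mathcal L_p^*\mu=\mu$. Write $\lambda=p^{-1}$, $\lambda^{[n]}(x)=\prod_{j=0}^{n-1}p(T^jx)^{-1}$, $H^{\beta[n]}(x)=\prod_{j=0}^{n-1}H(T^jx)^{\beta}$ and $\Lambda_n=H^{-\beta[n]}\lambda^{[n]}$. For Hölder positive $H$ and $\beta\in\mathbb R$, $\lambda_\beta>0$ denotes the largest eigenvalue of $\mathcal L_\beta:=\mathcal L_{-\beta\log H}$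 (so $\mathcal L_\beta f(x)=\sum_{T(z)=x}H(z)^{-\beta}f(z)$) and $\nu_\beta$ the unique probability with $\mathcal L_\beta^*\nu_\beta=\lambda_\beta\nu_\beta$. $\mathcal F_n=T^{-n}\mathcal B$ with $\mathcal B$ the Borel $\sigma$-algebra, and $E_\mu(f\mid\mathcal F_n)$ is the conditional expectation with respect to $\mu$; it equals $(\mathcal L_p^n f)\circ T^n$. *)

From HB Require Import structures.
From mathcomp Require Import all_boot all_order all_algebra.
From mathcomp Require Import all_classical all_reals all_analysis.
From mathcomp Require Import complex.

Set Implicit Arguments.
Unset Strict Implicit.
Unset Printing Implicit Defensive.

Import Order.TTheory GRing.Theory Num.Theory.
Import numFieldNormedType.Exports.
Local Open Scope ring_scope.
Local Open Scope classical_set_scope.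

Definition Sym (k : nat) : Type := discrete_topology 'I_k.+1.
HB.instance Definition _ (k : nat) := Choice.on (Sym k).
HB.instance Definition _ (k : nat) := isPointed.Build (Sym k) ord0.
HB.instance Definition _ (k : nat) := Nbhs.on (Sym k).
HB.instance Definition _ (k : nat) := Topological.on (Sym k).

Definition Xsp (k : nat) : Type := prod_topology (fun _ : nat => Sym k).
HB.instance Definition _ k := Pointed.copy (Xsp k) (nat -> Sym k).
HB.instance Definition _ k := Nbhs.on (Xsp k).
HB.instance Definition _ k := Topological.on (Xsp k).

Definition X (k : nat) : Type := g_sigma_algebraType (@open (Xsp k)).

(* the left shift T and the concatenation a.x (the k+1 preimages of x under T
   are exactly the points scons a x) *)
Definition shift {k : nat} (x : Xsp k) : Xsp k := fun n => x n.+1.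
Definition scons {k : nat} (a : 'I_k.+1) (x : Xsp k) : Xsp k :=
  fun n => if n is m.+1 then x m else a.

(** * Hoelder continuity on X, for the standard metric d(x,y) = theta^N(x,y),
    N(x,y) = first index where x and y differ (all such metrics give the same
    class of Hoelder functions). *)
Definition holder {R : realType} {k : nat} (g : Xsp k -> R) : Prop :=
  exists (C theta : R), 0 < theta < 1 /\
    forall (n : nat) (x y : Xsp k),
      (forall i, (i < n)%N -> x i = y i) -> `|g x - g y| <= C * theta ^+ n.

(** * Ruelle operators  L_A f (x) = sum_{T z = x} e^{A z} f z *)
Definition ruelle {R : realType} {k : nat} (A : Xsp k -> R) (f : Xsp k -> R)
  : Xsp k -> R :=
  fun x => \sum_(a : 'I_k.+1) expR (A (scons a x)) * f (scons a x).

Definition ruelleC {R : realType} {k : nat} (A : Xsp k -> R) (f : Xsp k -> R[i])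
  : Xsp k -> R[i] :=
  fun x => \sum_(a : 'I_k.+1) ((expR (A (scons a x)))%:C)%C * f (scons a x).

Definition is_eigenvalue_ruelle {R : realType} {k : nat} (A : Xsp k -> R)
    (lam : R) : Prop :=
  exists h : Xsp k -> R, continuous h /\ (exists x : Xsp k, h x != 0) /\
    forall x, ruelle A h x = lam * h x.

Definition is_largest_eigenvalue_ruelle {R : realType} {k : nat}
    (A : Xsp k -> R) (lam : R) : Prop :=
  is_eigenvalue_ruelle A lam /\
  forall l, is_eigenvalue_ruelle A l -> l <= lam.

(** * L_A^* nu = lam nu, i.e. int f d(L_A^* nu) := int L_A f dnu = lam int f dnu
    for every continuous f *)
Definition dual_eigen {R : realType} {k : nat} (A : Xsp k -> R) (lam : R)
    (nu : probability (X k) R) : Prop :=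
  forall f : Xsp k -> R, continuous f ->
    Rintegral nu setT (ruelle A f : X k -> R) = lam * Rintegral nu setT (f : X k -> R).

Definition cintegral {R : realType} {k : nat} (nu : probability (X k) R)
    (f : Xsp k -> R[i]) : R[i] :=
  ((Rintegral nu setT ((fun x => complex.Re (f x)) : X k -> R)) +i*
   (Rintegral nu setT ((fun x => complex.Im (f x)) : X k -> R)))%C.

Definition bprod {R : realType} {k : nat} (n : nat) (g : Xsp k -> R)
  : Xsp k -> R :=
  fun x => \prod_(j < n) g (iter j shift x).

(* Lambda_n = H^{-beta[n]} lambda^{[n]}, with lambda = p^{-1} *)
Definition Lambda {R : realType} {k : nat} (p H : Xsp k -> R) (beta : R)
    (n : nat) : Xsp k -> R :=
  fun x => bprod n (fun z => (H z `^ beta)^-1) x * bprod n (fun z => (p z)^-1) x.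

(** * E_mu(f | F_n) = (L_p^n f) o T^n, where L_p = L_{log p}: the continuous
    version of the conditional expectation w.r.t. the Gibbs state mu of the
    normalized potential log p (this is the version used in the paper). *)
Definition condexp {R : realType} {k : nat} (p : Xsp k -> R) (n : nat)
    (f : Xsp k -> R[i]) : Xsp k -> R[i] :=
  fun x => iter n (ruelleC (fun z => ln (p z))) f (iter n shift x).

From Pilot Require Import Defs.
From HB Require Import structures.
From mathcomp Require Import all_boot all_order all_algebra.
From mathcomp Require Import all_classical all_reals all_analysis.
From mathcomp Require Import complex.
Import Order.TTheory GRing.Theory Num.Theory.
Import numFieldNormedType.Exports.
Local Open Scope ring_scope.

(* With A = -β log H and B = log p, Λ_n is the Birkhoff product of e^{A - B},
   so L_B^n (Λ_n f) = L_A^n f; moreover L_A^n ((g ∘ T^n) u) = g L_A^n u. Hence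
   g := Λ_n^{-1} (L_B^n (Λ_n f)) ∘ T^n satisfies
   L_A^n g = L_A^n f · L_A^n (Λ_n^{-1}) = L_A^n f · L_B^n 1 = L_A^n f,
   as log p is normalized, and integrating against ν_β, for which
   L_A^* ν_β = λ_β ν_β, gives λ_β^n ∫ g dν_β = λ_β^n ∫ f dν_β. *)

Local Open Scope classical_set_scope.

Lemma continuous_into_prod_topology (I : eqType) (K : I -> topologicalType)
    (Y : topologicalType) (g : Y -> prod_topology K) :
  (forall i, continuous (fun y => g y i)) -> continuous g.
Proof.
move=> gi y; apply/cvg_sup => i.
move: y; apply/(@continuousP _ (initial_topology (@^~ i))) => A [B oB <-].
have -> : g @^-1` ((@^~ i) @^-1` B) = (fun y => g y i) @^-1` B by [].
by apply: open_comp => // + _; exact: gi.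
Qed.

Lemma continuous_sum (T : topologicalType) (R : realType) (I : Type)
    (s : seq I) (F : I -> T -> R) :
  (forall i, continuous (F i)) -> continuous (fun x => \sum_(i <- s) F i x).
Proof.
move=> Fi; rewrite -fct_sumE; apply: (big_ind (fun g => continuous g)) => //.
- exact: cst_continuous.
- by move=> g h cg ch x; exact: (continuousD (cg x) (ch x)).
Qed.

Lemma continuous_prod (T : topologicalType) (R : realType) (I : Type)
    (s : seq I) (F : I -> T -> R) :
  (forall i, continuous (F i)) -> continuous (fun x => \prod_(i <- s) F i x).
Proof.
move=> Fi; rewrite -fct_prodE; apply: (big_ind (fun g => continuous g)) => //.
- exact: cst_continuous.
- by move=> g h cg ch x; exact: (continuousM (cg x) (ch x)).
Qed.

Lemma continuous_ln_comp {T : topologicalType} {R : realType} {g : T -> R} :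
  (forall x, 0 < g x) -> continuous g -> continuous (fun x => ln (g x)).
Proof. by move=> g0 cg x; exact: (continuous_comp (cg x) (continuous_ln (g0 x))). Qed.

Section RuelleOperator.
Context {R : realType} {k : nat}.
Local Notation shift := (@Defs.shift k).
Implicit Types (A B u f g : Xsp k -> R).

Lemma ruelle_mul_shift A u g x :
  ruelle A (fun z => u z * g (shift z)) x = g x * ruelle A u x.
Proof. by rewrite /ruelle mulr_sumr; apply: eq_bigr => a _; rewrite mulrA mulrC. Qed.

Lemma iter_ruelle_mul_iter_shift n A u g :
  iter n (ruelle A) (fun z => u z * g (iter n shift z)) =
  (fun x => g x * iter n (ruelle A) u x).
Proof.
elim: n u => [|n IH] u; first by apply/funext => x; rewrite mulrC.
rewrite !iterSr -IH; congr iter; apply/funext => x.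
under eq_fun do rewrite iterSr.
by rewrite (ruelle_mul_shift A u (g \o iter n shift)) mulrC.
Qed.

Lemma iter_ruelle_normalized n B :
  (forall x, ruelle B (fun=> 1) x = 1) -> iter n (ruelle B) (fun=> 1) = (fun=> 1).
Proof. by move=> B1; elim: n => //= n ->; apply/funext. Qed.

Definition potential_ratio A B n : Xsp k -> R := bprod n (fun z => expR (A z - B z)).

Lemma potential_ratio_gt0 A B n x : 0 < potential_ratio A B n x.
Proof. by apply: prodr_gt0 => j _; rewrite expR_gt0. Qed.

Lemma potential_ratio_scons A B n a x :
  potential_ratio A B n.+1 (scons a x) =
  expR (A (scons a x) - B (scons a x)) * potential_ratio A B n x.
Proof. by rewrite /potential_ratio /bprod big_ord_recl; under eq_bigr do rewrite iterSr. Qed.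

Lemma iter_ruelle_potential_ratio n A B f :
  iter n (ruelle B) (fun z => potential_ratio A B n z * f z) = iter n (ruelle A) f.
Proof.
elim: n f => [|n IH] f.
  by apply/funext => x; rewrite /= /potential_ratio /bprod big_ord0 mul1r.
rewrite !iterSr -IH; congr iter; apply/funext => x.
rewrite /ruelle mulr_sumr; apply: eq_bigr => a _.
by rewrite potential_ratio_scons !mulrA -expRD addrC subrK (mulrC (expR _)).
Qed.

Definition twisted_condexp A B n f (x : Xsp k) : R :=
  (potential_ratio A B n x)^-1 *
  iter n (ruelle B) (fun z => potential_ratio A B n z * f z) (iter n shift x).

Lemma iter_ruelle_twisted_condexp n A B f :
  (forall x, ruelle B (fun=> 1) x = 1) ->
  iter n (ruelle A) (twisted_condexp A B n f) = iter n (ruelle A) f.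
Proof.
move=> B1; rewrite /twisted_condexp iter_ruelle_potential_ratio.
rewrite iter_ruelle_mul_iter_shift -[iter n (ruelle A) (fun z => _^-1)](iter_ruelle_potential_ratio n A B).
have -> : (fun z => potential_ratio A B n z * (potential_ratio A B n z)^-1) = fun=> 1.
  by apply/funext => z; rewrite mulfV // gt_eqF // potential_ratio_gt0.
by rewrite iter_ruelle_normalized //; apply/funext => x; rewrite mulr1.
Qed.

Lemma shift_continuous : continuous shift.
Proof.
apply: continuous_into_prod_topology => i.
exact: (@proj_continuous nat (fun _ => Sym k) i.+1).
Qed.

Lemma iter_shift_continuous n : continuous (iter n shift).
Proof.
elim: n => [|n IH] x /=; first exact: cvg_id.
by apply: continuous_comp; [exact: IH|exact: shift_continuous].
Qed.

Lemma scons_continuous (a : 'I_k.+1) : continuous (@scons k a).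
Proof.
apply: continuous_into_prod_topology => -[|i] /=; first exact: cst_continuous.
exact: (@proj_continuous nat (fun _ => Sym k) i).
Qed.

Lemma near_prefix (x : Xsp k) n :
  \forall y \near x, forall i, (i < n)%N -> x i = y i.
Proof.
(* Naming the filter instance keeps instance search on the product space from
   diverging. *)
have x_filter : ProperFilter (nbhs (x : Xsp k)) := nbhs_pfilter x.
elim: n => [|n IH]; first by apply: (@nearW _ _ _ x_filter) => y i.
have xn : \forall y \near x, y n = x n.
  exact: (@proj_continuous nat (fun _ => Sym k) n x [set x n]
    (@discrete_set1 (discrete_topology 'I_k.+1) (x n))).
near=> y => i; rewrite ltnS leq_eqVlt => /predU1P[->|]; first by rewrite (near xn y).
exact: (near IH y).
Unshelve. all: by end_near.
Qed.

Lemma holder_continuous {g : Xsp k -> R} : holder g -> continuous g.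
Proof.
move=> [C [th [/andP[th0 th1] gC]]] x.
have x_filter : ProperFilter (nbhs (x : Xsp k)) := nbhs_pfilter x.
have Cth0 : (fun n => C * th ^+ n) @ \oo --> (0 : R).
  rewrite -(mulr0 C); apply: cvgM; first exact: cvg_cst.
  by apply: cvg_expr; rewrite ger0_norm ?ltW.
apply/cvgrPdist_lt => e e0.
have [N _ CthN] := cvgr0_norm_lt _ Cth0 _ e0.
have {CthN} /= CthN := CthN N (leqnn N).
apply: filterS (near_prefix x N) => y xy.
apply: le_lt_trans (ler_norm _) _; apply: le_lt_trans CthN.
by rewrite normr_id; apply: le_trans (gC N x y xy) (ler_norm _).
Qed.

Lemma ruelle_continuous (A h : Xsp k -> R) :
  continuous A -> continuous h -> continuous (ruelle A h).
Proof.
move=> cA ch; apply: continuous_sum => a x.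
have eAa : {for x, continuous (fun y => expR (A (scons a y)))}.
  have Aa : {for x, continuous (A \o scons a)}.
    exact: continuous_comp (scons_continuous a x) (cA _).
  exact: (continuous_comp Aa (@continuous_expR R _)).
have ha : {for x, continuous (fun y => h (scons a y))}.
  exact: continuous_comp (scons_continuous a x) (ch _).
exact: (continuousM eAa ha).
Qed.

Lemma iter_ruelle_continuous n (A h : Xsp k -> R) :
  continuous A -> continuous h -> continuous (iter n (ruelle A) h).
Proof. by move=> cA ch; elim: n => //= n IH; exact: ruelle_continuous. Qed.

Lemma potential_ratio_continuous (A B : Xsp k -> R) n :
  continuous A -> continuous B -> continuous (potential_ratio A B n).
Proof.
move=> cA cB; apply: continuous_prod => j x.
have AB : continuous (fun z => A z - B z).
  by move=> z; exact: (continuousB (cA z) (cB z)).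
have eAB : continuous (fun z => expR (A z - B z)).
  by move=> z; exact: (continuous_comp (AB z) (@continuous_expR R _)).
exact: (continuous_comp (iter_shift_continuous j x) (eAB _)).
Qed.

Lemma twisted_condexp_continuous (A B f : Xsp k -> R) n :
  continuous A -> continuous B -> continuous f ->
  continuous (twisted_condexp A B n f).
Proof.
move=> cA cB cf x; rewrite /twisted_condexp iter_ruelle_potential_ratio.
have ratioV : {for x, continuous (fun y => (potential_ratio A B n y)^-1)}.
  apply: continuousV; first by rewrite gt_eqF ?potential_ratio_gt0.
  exact: potential_ratio_continuous.
have LAf : {for x, continuous (fun y => iter n (ruelle A) f (iter n shift y))}.
  exact: (continuous_comp (iter_shift_continuous n x)
    (iter_ruelle_continuous n A f cA cf _)).
exact: (continuousM ratioV LAf).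
Qed.

Lemma dual_eigen_iter n (A h : Xsp k -> R) lam (nu : probability (X k) R) :
  continuous A -> continuous h -> dual_eigen A lam nu ->
  Rintegral nu setT (iter n (ruelle A) h : X k -> R) =
  lam ^+ n * Rintegral nu setT (h : X k -> R).
Proof.
move=> cA ch nuA; elim: n => [|n IH]; first by rewrite mul1r.
rewrite /= nuA; last exact: iter_ruelle_continuous.
by rewrite IH exprS mulrA.
Qed.

Lemma integral_twisted_condexp {A B f : Xsp k -> R} {lam : R}
    {nu : probability (X k) R} n :
  continuous A -> continuous B -> continuous f ->
  (forall x, ruelle B (fun=> 1) x = 1) -> 0 < lam -> dual_eigen A lam nu ->
  Rintegral nu setT (f : X k -> R) =
  Rintegral nu setT (twisted_condexp A B n f : X k -> R).
Proof.
move=> cA cB cf B1 lam0 nuA.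
apply: (@mulfI _ (lam ^+ n)); first by rewrite expf_neq0 // gt_eqF.
have cg : continuous (twisted_condexp A B n f) by exact: twisted_condexp_continuous.
rewrite -(dual_eigen_iter n _ _ _ _ cA cf nuA) -(dual_eigen_iter n _ _ _ _ cA cg nuA).
by rewrite iter_ruelle_twisted_condexp.
Qed.

Lemma Re_realM (c : R) (z : R[i]) : complex.Re ((c%:C)%C * z) = c * complex.Re z.
Proof. by case: z => a b /=; rewrite mul0r subr0. Qed.

Lemma Im_realM (c : R) (z : R[i]) : complex.Im ((c%:C)%C * z) = c * complex.Im z.
Proof. by case: z => a b /=; rewrite mul0r addr0. Qed.

Lemma Re_iter_ruelleC n (A : Xsp k -> R) (F : Xsp k -> R[i]) x :
  complex.Re (iter n (ruelleC A) F x) =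
  iter n (ruelle A) (fun z => complex.Re (F z)) x.
Proof.
elim: n x => [|n IH] x //=; rewrite {1}/ruelleC {1}/ruelle.
rewrite (@raddf_sum _ _ (@complex.Re R : Rcomplex R -> R)).
by apply: eq_bigr => a _; rewrite -IH; exact: Re_realM.
Qed.

Lemma Im_iter_ruelleC n (A : Xsp k -> R) (F : Xsp k -> R[i]) x :
  complex.Im (iter n (ruelleC A) F x) =
  iter n (ruelle A) (fun z => complex.Im (F z)) x.
Proof.
elim: n x => [|n IH] x //=; rewrite {1}/ruelleC {1}/ruelle.
rewrite (@raddf_sum _ _ (@complex.Im R : Rcomplex R -> R)).
by apply: eq_bigr => a _; rewrite -IH; exact: Im_realM.
Qed.

End RuelleOperator.

Lemma Lambda_potential_ratio (R : realType) (k : nat) (p H : Xsp k -> R) beta n :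
  (forall x, 0 < p x) -> (forall x, 0 < H x) ->
  Lambda p H beta n =
  potential_ratio (fun z => - beta * ln (H z)) (fun z => ln (p z)) n.
Proof.
move=> p_pos H_pos; apply/funext => x.
rewrite /Lambda /potential_ratio /bprod -big_split; apply: eq_bigr => j _ /=.
by rewrite expRB lnK ?posrE // mulNr expRN /powR gt_eqF.
Qed.

Theorem lemma1p1 (R : realType) (k : nat)
  (p : Xsp k -> R) (p_pos : forall x, 0 < p x) (p_holder : holder p)
  (p_normalized : forall x, ruelle (fun z => ln (p z)) (fun=> 1) x = 1)
  (mu : probability (X k) R)
  (mu_gibbs : dual_eigen (fun z => ln (p z)) 1 mu)
  (H : Xsp k -> R) (H_pos : forall x, 0 < H x) (H_holder : holder H)
  (beta : R) (lam_beta : R) (lam_beta_pos : 0 < lam_beta)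
  (lam_beta_largest :
     is_largest_eigenvalue_ruelle (fun z => - beta * ln (H z)) lam_beta)
  (nu_beta : probability (X k) R)
  (nu_beta_eigen : dual_eigen (fun z => - beta * ln (H z)) lam_beta nu_beta)
  (n : nat) (f : Xsp k -> R[i])
  (f_cont : continuous (fun x => complex.Re (f x)) /\
            continuous (fun x => complex.Im (f x))) :
  cintegral nu_beta f =
  cintegral nu_beta (fun x =>
    ((Lambda p H beta n x)^-1)%:C%C *
    condexp p n (fun z => (Lambda p H beta n z)%:C%C * f z) x).
Proof.
have cB : continuous (fun z => ln (p z)).
  exact: continuous_ln_comp p_pos (holder_continuous p_holder).
have cA : continuous (fun z => - beta * ln (H z)).
  move=> x; have lnH := continuous_ln_comp H_pos (holder_continuous H_holder).
  exact: (continuousM (cvg_cst _) (lnH x)).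
rewrite Lambda_potential_ratio // /cintegral /condexp.
case: f_cont => cRe cIm; congr (_ +i* _)%C.
- rewrite (integral_twisted_condexp n cA cB cRe p_normalized lam_beta_pos nu_beta_eigen).
  congr Rintegral; apply/funext => x.
  rewrite Re_realM Re_iter_ruelleC /twisted_condexp; do 2 f_equal.
  by apply/funext => z; rewrite Re_realM.
- rewrite (integral_twisted_condexp n cA cB cIm p_normalized lam_beta_pos nu_beta_eigen).
  congr Rintegral; apply/funext => x.
  rewrite Im_realM Im_iter_ruelleC /twisted_condexp; do 2 f_equal.
  by apply/funext => z; rewrite Im_realM.
Qed.
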